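(* Let $\pi_1,\pi_2:\mathbb P^3\dashrightarrow\mathbb P^2$ be linear projections with non-coincident centers $c_1,c_2$. A permissible quadric $Q$ through $c_1,c_2$ defines a (non-degenerate quadratic) Cremona transformation $f:\mathbb P^2\dashrightarrow\mathbb P^2$ such that $f(\pi_1(p))=\pi_2(p)$ for every point $p\in Q$ (where defined). The base points of $f$ are $\pi_1(c_2)$ and the images under $\pi_1$ of the two lines contained in $Q$ passing through $c_1$. Similarly, the base points of $f^{-1}$ are $\pi_2(c_1)$ and the images under $\pi_2$ of the two lines contained in $Q$ passing through $c_2$.
   Context: Work over $\mathbb C$. A linear projection $\pi:\mathbb P^3\dashrightarrow\mathbb P^2$ is $p\mapsto Ap$, $A\in\mathbb C^{3\times4}$ of rank three, with center spanning $\ker A$. A permissible quadric (for centers $c_1\ne c_2$) is a smooth quadric surface containing $c_1,c_2$ but not containing the line $\overline{c_1c_2}$. A quadratic Cremona transformation is a birational map $\mathbb P^2\dashrightarrow\mathbb P^2$ given by three homogeneous quadrics; it has three base points and three exceptional lines, and is non-degenerate if these are distinct. *)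

(* Projective geometry over a field C, with points of P^n
   represented by nonzero column vectors 'cV[C]_(n+1) up to scaling. *)
From HB Require Import structures.
From mathcomp Require Import all_boot all_order all_algebra.
From mathcomp Require Import complex.
From mathcomp Require Import reals.
Set Implicit Arguments. Unset Strict Implicit. Unset Printing Implicit Defensive.
Import Order.TTheory GRing.Theory Num.Theory.
Local Open Scope ring_scope.

Section Proj.
Variable C : fieldType.

Definition colin n (u v : 'cV[C]_n) : Prop := (\rank (row_mx u v) <= 1)%N.

Definition psame n (u v : 'cV[C]_n) : Prop := u != 0 /\ v != 0 /\ colin u v.

Definition qform n (M : 'M[C]_n) (x : 'cV[C]_n) : C := (x^T *m M *m x) 0 0.

Definition onQ (M : 'M[C]_4) (p : 'cV[C]_4) : Prop := qform M p = 0.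

Definition smooth_quadric (M : 'M[C]_4) : Prop := M^T = M /\ \det M != 0.

Definition line_in_quadric (M : 'M[C]_4) (u v : 'cV[C]_4) : Prop :=
  forall a b : C, onQ M (a *: u + b *: v).

Definition linproj (A : 'M[C]_(3,4)) : Prop := \rank A = 3%N.

Definition is_center (A : 'M[C]_(3,4)) (c : 'cV[C]_4) : Prop := c != 0 /\ A *m c = 0.

(* a quadratic map P^2 --> P^2 given by three quadratic forms *)
Definition qmap := 'I_3 -> 'M[C]_3.
Definition qeval (F : qmap) (x : 'cV[C]_3) : 'cV[C]_3 := \col_k qform (F k) x.

Definition basept (F : qmap) (x : 'cV[C]_3) : Prop := x != 0 /\ qeval F x = 0.

(* exceptional line {a x = 0}: contracted by F to a single point *)
Definition exc_line (F : qmap) (a : 'rV[C]_3) : Prop :=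
  a != 0 /\ exists y : 'cV[C]_3, y != 0 /\
    forall x : 'cV[C]_3, x != 0 -> a *m x = 0 -> colin (qeval F x) y.

(* G is a (quadratic) rational inverse of F:  G o F = id and F o G = id
   as rational maps, i.e. G(F(x)) is proportional to x as a polynomial
   identity and not identically zero (and symmetrically). *)
Definition qinverse (F G : qmap) : Prop :=
  (forall x, colin (qeval G (qeval F x)) x) /\ (exists x, qeval G (qeval F x) != 0) /\
  (forall y, colin (qeval F (qeval G y)) y) /\ (exists y, qeval F (qeval G y) != 0).

Definition quad_cremona (F : qmap) : Prop := exists G, qinverse F G.

Definition nondeg_cremona (F : qmap) : Prop :=
  (exists x1 x2 x3 : 'cV[C]_3,
     [/\ basept F x1, basept F x2 & basept F x3] /\
     [/\ ~ colin x1 x2, ~ colin x1 x3 & ~ colin x2 x3] /\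
     forall x, basept F x -> [\/ colin x x1, colin x x2 | colin x x3]) /\
  (exists a1 a2 a3 : 'rV[C]_3,
     [/\ exc_line F a1, exc_line F a2 & exc_line F a3] /\
     [/\ ~ colin (a1^T) (a2^T), ~ colin (a1^T) (a3^T) & ~ colin (a2^T) (a3^T)] /\
     forall a, exc_line F a -> [\/ colin (a^T) (a1^T), colin (a^T) (a2^T) | colin (a^T) (a3^T)]).

Definition image_of_line_through (A : 'M[C]_(3,4)) (M : 'M[C]_4) (c : 'cV[C]_4)
  (x : 'cV[C]_3) : Prop :=
  exists d : 'cV[C]_4, ~ colin c d /\ line_in_quadric M c d /\ psame x (A *m d).

End Proj.

(* The statement is invariant under changes of coordinates in P^3 and in the two planes: they
   conjugate f and carry centers, base points and the lines of Q along.  Over a field of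
   characteristic other than 2 in which every element is a square, a smooth quadric through c1
   and c2 not containing the line c1 c2 has coordinates in which Q is x0 x1 + x2 x3 = 0,
   c1 = e0 and c2 = e1.  There pi1 and pi2 forget x0, resp. x1, and for p on Q the standard
   involution (x, y, z) |-> (- y z, x y, x z) sends (p1, p2, p3) to p1 (p0, p2, p3).  Its base
   points are the coordinate points, i.e. the images of c2 and of the two lines x1 = x2 = 0 and
   x1 = x3 = 0 of Q through c1, and its exceptional lines are the coordinate lines.  Any
   rational inverse of it vanishes at the coordinate points and is therefore a nonzero multiple
   of it: composed with the involution it is scalar on a projective frame. *)

From HB Require Import structures.
From mathcomp Require Import all_boot all_order all_algebra.
From mathcomp Require Import complex reals.
From mathcomp Require Import ring.
Set Implicit Arguments. Unset Strict Implicit. Unset Printing Implicit Defensive.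
Import Order.TTheory GRing.Theory Num.Theory.
Local Open Scope ring_scope.

Section ProjectivePoints.
Variable K : fieldType.

Lemma colinP n (u v : 'cV[K]_n) : colin u v <-> u = 0 \/ exists k, v = k *: u.
Proof.
rewrite /colin -mxrank_tr tr_row_mx -addsmxE; split.
  move=> r2; have [->|u_nz] := eqVneq u 0; [by left | right].
  have ru : \rank u^T = 1%N by rewrite rank_rV trmx_eq0 u_nz.
  have sum_sub : (u^T + v^T <= u^T)%MS.
    have /leqifP := mxrank_leqif_sup (addsmxSl u^T v^T).
    by case: ifP => // _; rewrite ru => lt1; move: r2; rewrite leqNgt lt1.
  have /sub_rVP [k ek] := submx_trans (addsmxSr u^T v^T) sum_sub.
  by exists k; apply: trmx_inj; rewrite ek linearZ.
have rank1 (w : 'rV[K]_n) m (s : 'M_(m, n)) : (s <= w)%MS -> (\rank s <= 1)%N.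
  by move=> /mxrankS le_sw; apply: leq_trans le_sw (rank_leq_row w).
case=> [->|[k ->]]; [apply: (rank1 v^T) | apply: (rank1 u^T)].
  by rewrite trmx0 addsmx_sub sub0mx submx_refl.
by rewrite addsmx_sub submx_refl linearZ scalemx_sub.
Qed.

Lemma colin0 n (v : 'cV[K]_n) : colin 0 v.
Proof. by apply/colinP; left. Qed.

Lemma colinZ n (u : 'cV[K]_n) k : colin u (k *: u).
Proof. by apply/colinP; right; exists k. Qed.

Lemma colin_sym n (u v : 'cV[K]_n) : colin u v -> colin v u.
Proof.
move/colinP=> [->|[k ->]]; first by rewrite -(scale0r v); apply: colinZ.
have [->|k_nz] := eqVneq k 0; first by rewrite scale0r; apply: colin0.
by rewrite -[u in colin _ u](scalerK k_nz); apply: colinZ.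
Qed.

Lemma colin_trans n (u v w : 'cV[K]_n) : v != 0 -> colin u v -> colin v w -> colin u w.
Proof.
move=> v_nz /colinP[-> _|[k ev]]; first exact: colin0.
move=> /colinP[v0|[l ->]]; first by rewrite v0 eqxx in v_nz.
by rewrite ev scalerA; apply: colinZ.
Qed.

Lemma colinZl n (u v : 'cV[K]_n) k : k != 0 -> colin (k *: u) v <-> colin u v.
Proof.
move=> k_nz; have [->|u_nz] := eqVneq u 0; first by rewrite scaler0; split=> _; apply: colin0.
have ku_nz : k *: u != 0 by rewrite scaler_eq0 negb_or k_nz.
split; first exact: colin_trans (colinZ u k).
exact/colin_trans/colin_sym/colinZ.
Qed.

Lemma not_colin_coord n (u v : 'cV[K]_n) i j :
  u i 0 != 0 -> u j 0 = 0 -> v j 0 != 0 -> ~ colin u v.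
Proof.
move=> ui uj vj /colinP[u0|[k ev]]; first by rewrite u0 mxE eqxx in ui.
by rewrite ev mxE uj mulr0 eqxx in vj.
Qed.

Lemma not_colin_sign n (u v : 'cV[K]_n) i j : (2 : K) != 0 ->
  u i 0 != 0 -> v i 0 = u i 0 -> u j 0 != 0 -> v j 0 = - u j 0 -> ~ colin u v.
Proof.
move=> char2 ui vi uj vj /colinP[u0|[k ev]]; first by rewrite u0 mxE eqxx in ui.
have k1 : k = 1 by apply: (mulIf ui); rewrite mul1r -[RHS]vi ev mxE.
move: vj; rewrite ev k1 scale1r => /eqP; rewrite -addr_eq0 -mulr2n -mulr_natl.
by rewrite mulf_eq0 (negPf char2) (negPf uj).
Qed.

Lemma colin_mulmx m n (D : 'M[K]_(m, n)) u v : colin u v -> colin (D *m u) (D *m v).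
Proof.
by move/colinP=> [->|[k ->]]; rewrite ?mulmx0 -?scalemxAr; [apply: colin0 | apply: colinZ].
Qed.

Lemma colin_unitmx n (D : 'M[K]_n) u v :
  D \in unitmx -> colin (D *m u) (D *m v) <-> colin u v.
Proof.
move=> Du; split; last exact: colin_mulmx.
by move/(colin_mulmx (invmx D)); rewrite !mulKmx.
Qed.

Lemma mulmx_unit_eq0 n (D : 'M[K]_n) (u : 'cV[K]_n) :
  D \in unitmx -> (D *m u == 0) = (u == 0).
Proof.
move=> Du; apply/eqP/eqP => [Du0|->]; last by rewrite mulmx0.
by rewrite -(mulKmx Du u) Du0 mulmx0.
Qed.

Lemma psameP n (x v : 'cV[K]_n) :
  psame x v <-> v != 0 /\ exists2 k, k != 0 & x = k *: v.
Proof.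
split=> [[x_nz [v_nz]]|[v_nz [k k_nz ->]]].
  move=> /colinP[x0|[k ev]]; first by rewrite x0 eqxx in x_nz.
  have k_nz : k != 0 by apply: contraNneq v_nz => k0; rewrite ev k0 scale0r.
  by split=> //; exists k^-1; rewrite ?invr_eq0 // ev scalerK.
split; first by rewrite scaler_eq0 negb_or k_nz.
by split=> //; apply/colin_sym/colinZ.
Qed.

Lemma psame_refl n (x : 'cV[K]_n) : x != 0 -> psame x x.
Proof. by move=> x_nz; apply/psameP; split=> //; exists 1; rewrite ?oner_eq0 ?scale1r. Qed.

Lemma psameZr n (x v : 'cV[K]_n) k : k != 0 -> psame x (k *: v) <-> psame x v.
Proof.
move=> k_nz; rewrite !psameP scaler_eq0 negb_or k_nz /=.
split=> -[v_nz [l l_nz ->]]; split=> //.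
  by exists (l * k); rewrite ?mulf_neq0 // scalerA.
by exists (l / k); rewrite ?mulf_neq0 ?invr_eq0 // scalerA mulfVK.
Qed.

Lemma psame_unitmx n (D : 'M[K]_n) u v :
  D \in unitmx -> psame (D *m u) (D *m v) <-> psame u v.
Proof. by move=> Du; rewrite /psame !mulmx_unit_eq0 // colin_unitmx. Qed.

Lemma psame_mulmxr n (D : 'M[K]_n) x v :
  D \in unitmx -> psame x (D *m v) <-> psame (invmx D *m x) v.
Proof. by move=> Du; rewrite -(@psame_unitmx _ (invmx D)) ?unitmx_inv // mulKmx. Qed.

End ProjectivePoints.

Section Coordinates.
Variable K : fieldType.

Lemma sum3 (F : 'I_3 -> K) : \sum_i F i = F 0 + F 1 + F 2.
Proof. by rewrite !big_ord_recr big_ord0 /= add0r; congr (F _ + F _ + F _); apply: val_inj. Qed.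

Lemma sum4 (F : 'I_4 -> K) : \sum_i F i = F 0 + F 1 + F 2 + F 3.
Proof.
by rewrite !big_ord_recr big_ord0 /= add0r; congr (F _ + F _ + F _ + F _); apply: val_inj.
Qed.

Definition v3 (a b c : K) : 'cV[K]_3 := \col_(i < 3) [:: a; b; c]`_i.
Definition v4 (a b c d : K) : 'cV[K]_4 := \col_(i < 4) [:: a; b; c; d]`_i.

Lemma v3E (z : 'cV[K]_3) : z = v3 (z 0 0) (z 1 0) (z 2 0).
Proof.
apply/matrixP => i j; rewrite !mxE ord1.
by case: i => [[|[|[|m]]] Hi] //=; congr (z _ _); apply: val_inj.
Qed.

Lemma v4E (z : 'cV[K]_4) : z = v4 (z 0 0) (z 1 0) (z 2 0) (z 3 0).
Proof.
apply/matrixP => i j; rewrite !mxE ord1.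
by case: i => [[|[|[|[|m]]]] Hi] //=; congr (z _ _); apply: val_inj.
Qed.

Lemma v3_eq0 a b c : (v3 a b c == 0) = [&& a == 0, b == 0 & c == 0].
Proof.
apply/eqP/and3P => [/matrixP abc0|[/eqP-> /eqP-> /eqP->]]; last by rewrite [RHS]v3E !mxE.
by split; apply/eqP; [move: (abc0 0 0) | move: (abc0 1 0) | move: (abc0 2 0)]; rewrite !mxE.
Qed.

Lemma v4_eq0 a b c d : (v4 a b c d == 0) = [&& a == 0, b == 0, c == 0 & d == 0].
Proof.
apply/eqP/and4P => [/matrixP abcd0|[/eqP-> /eqP-> /eqP-> /eqP->]].
  by split; apply/eqP; [move: (abcd0 0 0) | move: (abcd0 1 0) | move: (abcd0 2 0)
    | move: (abcd0 3 0)]; rewrite !mxE.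
by rewrite [RHS]v4E !mxE.
Qed.

Lemma cV4_eq0 (v : 'cV[K]_4) : v 0 0 = 0 -> v 1 0 = 0 -> v 2 0 = 0 -> v 3 0 = 0 -> v = 0.
Proof. by move=> v0 v1 v2 v3; rewrite [v]v4E v0 v1 v2 v3; apply/eqP; rewrite v4_eq0 !eqxx. Qed.

Lemma v3_inj a b c a' b' c' : v3 a b c = v3 a' b' c' -> [/\ a = a', b = b' & c = c'].
Proof.
by move/matrixP=> e; split; [move: (e 0 0) | move: (e 1 0) | move: (e 2 0)]; rewrite !mxE.
Qed.

Lemma v3_neq0 a b c : [\/ a != 0, b != 0 | c != 0] -> v3 a b c != 0.
Proof. by rewrite v3_eq0 => -[] /negPf ->; rewrite ?andbF. Qed.

Lemma v3Z k a b c : k *: v3 a b c = v3 (k * a) (k * b) (k * c).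
Proof. by rewrite [LHS]v3E !mxE. Qed.

Lemma v4Z k a b c d : k *: v4 a b c d = v4 (k * a) (k * b) (k * c) (k * d).
Proof. by rewrite [LHS]v4E !mxE. Qed.

Lemma v3D a b c a' b' c' : v3 a b c + v3 a' b' c' = v3 (a + a') (b + b') (c + c').
Proof. by rewrite [LHS]v3E !mxE. Qed.

Lemma v4D a b c d a' b' c' d' :
  v4 a b c d + v4 a' b' c' d' = v4 (a + a') (b + b') (c + c') (d + d').
Proof. by rewrite [LHS]v4E !mxE. Qed.

Lemma v3_dot_eq0 a b c x y z :
  ((v3 a b c)^T *m v3 x y z == 0) = (a * x + b * y + c * z == 0).
Proof.
apply/eqP/eqP => [/matrixP/(_ 0 0)|abc0]; first by rewrite !mxE sum3 !mxE.
by apply/matrixP => i j; rewrite !ord1 !mxE sum3 !mxE.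
Qed.

End Coordinates.

Section QuadraticMaps.
Variable K : fieldType.

Lemma qformE n (N : 'M[K]_n) z : qform N z = \sum_j \sum_i z i 0 * N i j * z j 0.
Proof.
rewrite /qform mxE; apply: eq_bigr => j _; rewrite mxE big_distrl /=.
by apply: eq_bigr => i _; rewrite mxE.
Qed.

Lemma qform3 (N : 'M[K]_3) a b c : qform N (v3 a b c) =
  a * N 0 0 * a + a * N 0 1 * b + a * N 0 2 * c +
  (b * N 1 0 * a + b * N 1 1 * b + b * N 1 2 * c) +
  (c * N 2 0 * a + c * N 2 1 * b + c * N 2 2 * c).
Proof. by rewrite qformE !sum3 !mxE /=; ring. Qed.

Lemma qformZ n (N : 'M[K]_n) k v : qform N (k *: v) = k ^+ 2 * qform N v.
Proof.
rewrite !qformE mulr_sumr; apply: eq_bigr => j _; rewrite mulr_sumr.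
by apply: eq_bigr => i _; rewrite !mxE; ring.
Qed.

Lemma qform_mulmx n (T N : 'M[K]_n) x : qform (T^T *m N *m T) x = qform N (T *m x).
Proof. by rewrite /qform trmx_mul !mulmxA. Qed.

Lemma qevalE (F : qmap K) z : qeval F z = v3 (qform (F 0) z) (qform (F 1) z) (qform (F 2) z).
Proof. by rewrite [LHS]v3E !mxE. Qed.

Lemma qevalZ (F : qmap K) k v : qeval F (k *: v) = k ^+ 2 *: qeval F v.
Proof. by apply/matrixP => i j; rewrite !mxE qformZ. Qed.

Lemma qevalN (F : qmap K) v : qeval F (- v) = qeval F v.
Proof. by rewrite -scaleN1r qevalZ sqrrN expr1n scale1r. Qed.

Lemma qeval0 (F : qmap K) : qeval F 0 = 0.
Proof. by rewrite -(scale0r (0 : 'cV[K]_3)) qevalZ expr2 mul0r !scale0r. Qed.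

Definition qcomp (P : 'M[K]_3) (F : qmap K) (T : 'M[K]_3) : qmap K :=
  fun k => \sum_j P k j *: (T^T *m F j *m T).

Lemma qcompE P F T x : qeval (qcomp P F T) x = P *m qeval F (T *m x).
Proof.
apply/matrixP => i j; rewrite !mxE /qform mulmx_sumr mulmx_suml summxE.
apply: eq_bigr => k _; rewrite -scalemxAr -scalemxAl mxE.
by rewrite [qeval _ _ _ _]mxE -qform_mulmx /qform !mulmxA.
Qed.

Lemma exc_line_colin (F : qmap K) a x x' : exc_line F a -> a *m x = 0 -> a *m x' = 0 ->
  qeval F x != 0 -> colin (qeval F x) (qeval F x').
Proof.
move=> [_ [y [y_nz Fy]]] ax ax' Fx_nz.
have x_nz : x != 0 by apply: contraNneq Fx_nz => ->; rewrite qeval0.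
have [->|x'_nz] := eqVneq x' 0; first by rewrite qeval0; apply/colin_sym/colin0.
exact: colin_trans y_nz (Fy x x_nz ax) (colin_sym (Fy x' x'_nz ax')).
Qed.

Lemma qeval_ext_qinverse (F F' G G' : qmap K) :
  qeval F =1 qeval F' -> qeval G =1 qeval G' -> qinverse F G -> qinverse F' G'.
Proof.
move=> eF eG [GF [[x GFx] [FG [y FGy]]]].
split; [|split; [|split]].
- by move=> z; rewrite -eF -eG.
- by exists x; rewrite -eF -eG.
- by move=> z; rewrite -eG -eF.
- by exists y; rewrite -eG -eF.
Qed.

Section Conjugation.
Variables P T : 'M[K]_3.
Hypotheses (Pu : P \in unitmx) (Tu : T \in unitmx).

Lemma basept_qcomp F x : basept (qcomp P F T) x <-> basept F (T *m x).
Proof.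
rewrite /basept qcompE; split=> -[x_nz /eqP Fx0].
  by split; [rewrite mulmx_unit_eq0 | apply/eqP; rewrite -(mulmx_unit_eq0 _ Pu)].
by split; [rewrite -(mulmx_unit_eq0 _ Tu) | apply/eqP; rewrite mulmx_unit_eq0].
Qed.

Lemma qinverse_qcomp F G : qinverse F G -> qinverse (qcomp P F T) (qcomp (invmx T) G (invmx P)).
Proof.
move=> [GF [[x GFx] [FG [y FGy]]]]; split; [|split; [|split]].
- move=> z; rewrite !qcompE mulKmx //.
  by rewrite -{2}(mulKmx Tu z); apply: colin_mulmx.
- exists (invmx T *m x); rewrite !qcompE mulKmx // mulKVmx //.
  by rewrite mulmx_unit_eq0 ?unitmx_inv.
- move=> z; rewrite !qcompE mulKVmx //.
  by rewrite -{2}(mulKVmx Pu z); apply: colin_mulmx.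
- by exists (P *m y); rewrite !qcompE mulKmx // mulKVmx // mulmx_unit_eq0.
Qed.

Lemma exc_line_qcomp F a : exc_line F a -> exc_line (qcomp P F T) (a *m T).
Proof.
move=> [a_nz [y [y_nz Fy]]]; split.
  by apply: contraNneq a_nz => aT0; rewrite -(mulmxK Tu a) aT0 mul0mx.
exists (P *m y); split; first by rewrite mulmx_unit_eq0.
move=> x x_nz ax0; rewrite qcompE; apply/colin_mulmx/Fy; last by rewrite mulmxA.
by rewrite mulmx_unit_eq0.
Qed.

End Conjugation.

Lemma eq_exc_line (F G : qmap K) a : qeval F =1 qeval G -> exc_line F a -> exc_line G a.
Proof.
move=> eFG [a_nz [y [y_nz Fy]]]; split=> //; exists y; split=> // x.
by rewrite -eFG; apply: Fy.
Qed.

Lemma qcompK P F T : P \in unitmx -> T \in unitmx ->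
  qeval (qcomp (invmx P) (qcomp P F T) (invmx T)) =1 qeval F.
Proof. by move=> Pu Tu x; rewrite !qcompE mulKVmx // mulKmx. Qed.

Lemma exc_line_qcompV P F T a : P \in unitmx -> T \in unitmx ->
  exc_line (qcomp P F T) a -> exc_line F (a *m invmx T).
Proof.
move=> Pu Tu exa.
have [Piu Tiu] : invmx P \in unitmx /\ invmx T \in unitmx by rewrite !unitmx_inv.
exact: eq_exc_line (qcompK F Pu Tu) (exc_line_qcomp Piu Tiu exa).
Qed.

Lemma nondeg_qcomp P F T : P \in unitmx -> T \in unitmx ->
  nondeg_cremona F -> nondeg_cremona (qcomp P F T).
Proof.
move=> Pu Tu [[x1 [x2 [x3 [[b1 b2 b3] [[n12 n13 n23] Hb]]]]]
  [a1 [a2 [a3 [[e1 e2 e3] [[m12 m13 m23] He]]]]]].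
have Tiu : invmx T \in unitmx by rewrite unitmx_inv.
have TTu : T^T \in unitmx by rewrite unitmx_tr.
have bpT x : basept F x -> basept (qcomp P F T) (invmx T *m x).
  by move=> bx; apply/(basept_qcomp Pu Tu); rewrite mulKVmx.
split.
  exists (invmx T *m x1), (invmx T *m x2), (invmx T *m x3).
  split; first by split; apply: bpT.
  split.
  - by split=> /(colin_unitmx _ _ Tiu); [apply: n12 | apply: n13 | apply: n23].
  - move=> x /(basept_qcomp Pu Tu) /Hb colx; rewrite -(mulKmx Tu x).
    by case: colx => c; [constructor 1 | constructor 2 | constructor 3]; apply: colin_mulmx.
exists (a1 *m T), (a2 *m T), (a3 *m T).
split; first by split; apply: exc_line_qcomp.
split.
- by split; rewrite !trmx_mul => /(colin_unitmx _ _ TTu); [apply: m12 | apply: m13 | apply: m23].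
- move=> a /(exc_line_qcompV Pu Tu) /He cola; rewrite -(mulmxKV Tu a) !(trmx_mul _ T).
  by case: cola => c; [constructor 1 | constructor 2 | constructor 3]; apply: colin_mulmx.
Qed.

End QuadraticMaps.

Section StdCremona.
Variable K : fieldType.
Hypothesis char2 : (2 : K) != 0.

Local Notation E0 := (v3 1 0 0 : 'cV[K]_3).
Local Notation E1 := (v3 0 1 0 : 'cV[K]_3).
Local Notation E2 := (v3 0 0 1 : 'cV[K]_3).

Lemma mulmx_v3 (L : 'M[K]_3) a b c : L *m v3 a b c =
  v3 (L 0 0 * a + L 0 1 * b + L 0 2 * c) (L 1 0 * a + L 1 1 * b + L 1 2 * c)
     (L 2 0 * a + L 2 1 * b + L 2 2 * c).
Proof. by rewrite [LHS]v3E !mxE !sum3 !mxE. Qed.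

Lemma frame_eigen_scalar (L : 'M[K]_3) :
  colin (L *m v3 1 1 1) (v3 1 1 1) -> colin (L *m v3 (-1) 1 1) (v3 (-1) 1 1) ->
  colin (L *m v3 1 (-1) 1) (v3 1 (-1) 1) -> colin (L *m v3 1 1 (-1)) (v3 1 1 (-1)) ->
  exists k, L = k%:M.
Proof.
have n1 : (1 : K) != 0 := oner_neq0 K.
have nm1 : (-1 : K) != 0 by rewrite oppr_eq0.
have eigen a b c : a != 0 -> colin (L *m v3 a b c) (v3 a b c) ->
    exists k, L *m v3 a b c = k *: v3 a b c.
  move=> a_nz /colin_sym /colinP[x0|//].
  by have := v3_neq0 (Or31 (b != 0) (c != 0) a_nz); rewrite x0 eqxx.
move=> hs h0 h1 h2.
have [[ks Ls] [k0 L0]] := (eigen _ _ _ n1 hs, eigen _ _ _ nm1 h0).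
have [[k1 L1] [k2 L2]] := (eigen _ _ _ n1 h1, eigen _ _ _ n1 h2).
have frame_sum : v3 (-1) 1 1 + v3 1 (-1) 1 + v3 1 1 (-1) = v3 1 1 1 :> 'cV[K]_3.
  by rewrite !v3D; congr v3; ring.
have : k0 *: v3 (-1) 1 1 + k1 *: v3 1 (-1) 1 + k2 *: v3 1 1 (-1) =
       ks *: v3 (-1) 1 1 + ks *: v3 1 (-1) 1 + ks *: v3 1 1 (-1).
  by rewrite -L0 -L1 -L2 -!mulmxDr frame_sum Ls -frame_sum !scalerDr.
rewrite !v3Z !v3D => /v3_inj[e0 e1 e2].
have k0E : k0 = ks.
  apply: (mulfI char2); transitivity ((k0 * 1 + k1 * -1 + k2 * 1) + (k0 * 1 + k1 * 1 + k2 * -1)).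
    by ring.
  by rewrite e1 e2; ring.
have k1E : k1 = ks.
  apply: (mulfI char2); transitivity ((k0 * -1 + k1 * 1 + k2 * 1) + (k0 * 1 + k1 * 1 + k2 * -1)).
    by ring.
  by rewrite e0 e2; ring.
have k2E : k2 = ks.
  apply: (mulfI char2); transitivity ((k0 * -1 + k1 * 1 + k2 * 1) + (k0 * 1 + k1 * -1 + k2 * 1)).
    by ring.
  by rewrite e0 e1; ring.
rewrite {}k0E in L0; rewrite {}k1E in L1; rewrite {}k2E in L2.
(* the frame vectors other than [v3 1 1 1] form a basis when 2 != 0 *)
have Lv (v : 'cV[K]_3) : L *m v = ks *: v.
  rewrite [v]v3E; set x := v 0 0; set y := v 1 0; set z := v 2 0.
  have -> : v3 x y z =
      ((y + z) / 2) *: v3 (-1) 1 1 + ((x + z) / 2) *: v3 1 (-1) 1 + ((x + y) / 2) *: v3 1 1 (-1).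
    by rewrite !v3Z !v3D; congr v3; field.
  by rewrite !mulmxDr -!scalemxAr L0 L1 L2 !scalerDr !scalerA [ks * _]mulrC ![ks * _]mulrC.
exists ks; apply/matrixP => i j.
move/matrixP/(_ i 0): (Lv (delta_mx j 0)); rewrite -colE !mxE => ->.
by rewrite eqxx andbT mulr_natr.
Qed.

Lemma coord_points_neq0 : [/\ E0 != 0, E1 != 0 & E2 != 0].
Proof.
by split; apply: v3_neq0; [constructor 1 | constructor 2 | constructor 3]; apply: oner_neq0.
Qed.

Lemma coord_points_not_colin : [/\ ~ colin E0 E1, ~ colin E0 E2 & ~ colin E1 E2].
Proof.
have n1 := oner_neq0 K.
split; [apply: (@not_colin_coord _ _ _ _ 0 1) | apply: (@not_colin_coord _ _ _ _ 0 2)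
  | apply: (@not_colin_coord _ _ _ _ 1 2)]; by rewrite !mxE.
Qed.

Definition std_cremona : qmap K := fun k =>
  \matrix_(i, j) (if k == 0 then - ((i == 1) && (j == 2))%:R
                  else if k == 1 then ((i == 0) && (j == 1))%:R
                  else ((i == 0) && (j == 2))%:R).
Local Notation F0 := std_cremona.

Lemma std_cremonaE a b c : qeval F0 (v3 a b c) = v3 (- (b * c)) (a * b) (a * c).
Proof. by rewrite qevalE !qform3 !mxE /=; congr v3; ring. Qed.

Lemma std_cremonaK a b c : qeval F0 (qeval F0 (v3 a b c)) = (- (a * b * c)) *: v3 a b c.
Proof. by rewrite !std_cremonaE v3Z; congr v3; ring. Qed.

Lemma qinverse_std_cremona : qinverse F0 F0.
Proof.
have FF x : colin (qeval F0 (qeval F0 x)) x.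
  by rewrite [x]v3E std_cremonaK; apply/colin_sym/colinZ.
have FF1 : qeval F0 (qeval F0 (v3 1 1 1)) != 0.
  rewrite std_cremonaK scaler_eq0 negb_or !mulr1 oppr_eq0 oner_eq0 /=.
  by apply: v3_neq0; constructor 1; apply: oner_neq0.
by split; [|split; [exists (v3 1 1 1)|split; [|exists (v3 1 1 1)]]].
Qed.

Lemma basept_std_cremona x : basept F0 x <-> [\/ psame x E0, psame x E1 | psame x E2].
Proof.
have [E0_nz E1_nz E2_nz] := coord_points_neq0.
rewrite [x]v3E; move: (x 0 0) (x 1 0) (x 2 0) => a b c.
split.
  move=> [x_nz]; rewrite std_cremonaE => /eqP.
  rewrite v3_eq0 oppr_eq0 !mulf_eq0 => /and3P[bc ab ac].
  have [a0|a_nz] := eqVneq a 0; last first.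
    rewrite (negPf a_nz) /= in ab ac; rewrite (eqP ab) (eqP ac).
    by constructor 1; apply/psameP; split=> //; exists a; rewrite // v3Z mulr1 !mulr0.
  have [b0|b_nz] := eqVneq b 0; last first.
    rewrite (negPf b_nz) /= in bc; rewrite a0 (eqP bc).
    by constructor 2; apply/psameP; split=> //; exists b; rewrite // v3Z mulr1 !mulr0.
  have [c0|c_nz] := eqVneq c 0; first by rewrite a0 b0 c0 v3_eq0 !eqxx in x_nz.
  by rewrite a0 b0; constructor 3; apply/psameP; split=> //; exists c; rewrite // v3Z mulr1 !mulr0.
case=> /psameP[e_nz [k k_nz ->]]; (split; first by rewrite scaler_eq0 negb_or k_nz);
  by rewrite v3Z std_cremonaE !(mulr0, mul0r, mulr1, oppr0) [RHS]v3E !mxE.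
Qed.

Lemma exc_line_coord_std_cremona : [/\ exc_line F0 E0^T, exc_line F0 E1^T & exc_line F0 E2^T].
Proof.
have [E0_nz E1_nz E2_nz] := coord_points_neq0.
have exc a0 a1 a2 y : v3 a0 a1 a2 != 0 -> y != 0 ->
    (forall b c d, a0 * b + a1 * c + a2 * d = 0 -> colin (qeval F0 (v3 b c d)) y) ->
    exc_line F0 (v3 a0 a1 a2)^T.
  move=> a_nz y_nz Fy; split; first by rewrite trmx_eq0.
  by exists y; split=> // x _; rewrite [x]v3E => /eqP; rewrite v3_dot_eq0 => /eqP /Fy.
split; [apply: (exc _ _ _ E0) | apply: (exc _ _ _ E2) | apply: (exc _ _ _ E1)] => // b c d.
- rewrite mul1r !mul0r !addr0 => ->; rewrite std_cremonaE !mul0r.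
  by apply/colin_sym/colinP; right; exists (- (c * d)); rewrite v3Z mulr1 !mulr0.
- rewrite mul1r !mul0r add0r addr0 => ->; rewrite std_cremonaE !(mul0r, mulr0) oppr0.
  by apply/colin_sym/colinP; right; exists (b * d); rewrite v3Z mulr1 !mulr0.
- rewrite mul1r !mul0r !add0r => ->; rewrite std_cremonaE !mulr0 oppr0.
  by apply/colin_sym/colinP; right; exists (b * c); rewrite v3Z mulr1 !mulr0.
Qed.

Lemma exc_line_std_cremona a :
  exc_line F0 a -> [\/ colin a^T E0, colin a^T E1 | colin a^T E2].
Proof.
have aE : a = (v3 (a 0 0) (a 0 1) (a 0 2))^T by rewrite -[LHS]trmxK [a^T]v3E !mxE.
rewrite aE trmxK; move: (a 0 0) (a 0 1) (a 0 2) => a0 a1 a2 {a aE} exa.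
have sep x y z x' y' z' i j :
    a0 * x + a1 * y + a2 * z = 0 -> a0 * x' + a1 * y' + a2 * z' = 0 ->
    qeval F0 (v3 x y z) i 0 != 0 -> qeval F0 (v3 x y z) j 0 = 0 ->
    qeval F0 (v3 x' y' z') j 0 != 0 -> False.
  move=> ax ax' Fi Fj Fj'; apply: (not_colin_coord Fi Fj Fj').
  apply: (exc_line_colin exa); try by apply/eqP; rewrite v3_dot_eq0; apply/eqP.
  by apply: contraNneq Fi => ->; rewrite mxE.
have [a00|a0_nz] := eqVneq a0 0.
  have [a10|a1_nz] := eqVneq a1 0.
    constructor 3; rewrite a00 a10; apply/colin_sym/colinP; right.
    by exists a2; rewrite v3Z mulr1 !mulr0.
  have [a20|a2_nz] := eqVneq a2 0.
    constructor 2; rewrite a00 a20; apply/colin_sym/colinP; right.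
    by exists a1; rewrite v3Z mulr1 !mulr0.
  exfalso; apply: (sep 0 a2 (- a1) 1 a2 (- a1) 0 1); rewrite ?std_cremonaE ?mxE /= ?a00;
    try ring; by rewrite ?(mulrN, mulNr, opprK, oppr_eq0, mul1r, mul0r, mulr0) ?mulf_neq0.
have [a10|a1_nz] := eqVneq a1 0; last first.
  exfalso; apply: (sep a1 (- a0) 0 (- (a1 + a2)) a0 a0 1 0); rewrite ?std_cremonaE ?mxE /=;
    try ring; by rewrite ?(mulrN, mulNr, opprK, oppr_eq0, mul1r, mul0r, mulr0) ?mulf_neq0.
have [a20|a2_nz] := eqVneq a2 0.
  constructor 1; rewrite a10 a20; apply/colin_sym/colinP; right.
  by exists a0; rewrite v3Z mulr1 !mulr0.
exfalso; apply: (sep a2 0 (- a0) (- (a1 + a2)) a0 a0 2 0); rewrite ?std_cremonaE ?mxE /= ?a10;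
  try ring; by rewrite ?(mulrN, mulNr, opprK, oppr_eq0, mul1r, mul0r, mulr0) ?mulf_neq0.
Qed.

Lemma nondeg_std_cremona : nondeg_cremona F0.
Proof.
have [E0_nz E1_nz E2_nz] := coord_points_neq0.
have [n01 n02 n12] := coord_points_not_colin.
split.
  exists E0, E1, E2; split; last split => //.
    by split; apply/basept_std_cremona; [constructor 1 | constructor 2 | constructor 3];
      apply: psame_refl.
  by move=> x /basept_std_cremona[] [_ [_ colx]]; [constructor 1 | constructor 2 | constructor 3].
exists E0^T, E1^T, E2^T; rewrite !trmxK; split; last split => //.
  exact: exc_line_coord_std_cremona.
exact: exc_line_std_cremona.
Qed.

Lemma std_cremona_qinverse_vanish (G : qmap K) :
  (forall x, colin (qeval G (qeval F0 x)) x) ->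
  [/\ qeval G E0 = 0, qeval G E1 = 0 & qeval G E2 = 0].
Proof.
move=> GF.
(* [G] sends [v] and [- v] to the same point, which must then be
   proportional to both preimages [u] and [w] *)
have vanish u w v : qeval F0 u = v -> qeval F0 w = (-1) *: v -> ~ colin u w -> qeval G v = 0.
  move=> Fu Fw nc; have [//|Gv_nz] := eqVneq (qeval G v) 0; exfalso; apply: nc.
  apply: (colin_trans Gv_nz); first by apply/colin_sym; rewrite -Fu.
  by rewrite -qevalN -scaleN1r -Fw.
have n1 := oner_neq0 K.
split.
- apply: (vanish (v3 0 1 (-1)) (v3 0 1 1)); rewrite ?std_cremonaE ?v3Z; try by congr v3; ring.
  by apply: (@not_colin_sign _ _ _ _ 1 2 char2); rewrite !mxE /= ?oppr_eq0 ?opprK.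
- apply: (vanish (v3 1 1 0) (v3 1 (-1) 0)); rewrite ?std_cremonaE ?v3Z; try by congr v3; ring.
  by apply: (@not_colin_sign _ _ _ _ 0 1 char2); rewrite !mxE /= ?oppr_eq0 ?opprK.
- apply: (vanish (v3 1 0 1) (v3 1 0 (-1))); rewrite ?std_cremonaE ?v3Z; try by congr v3; ring.
  by apply: (@not_colin_sign _ _ _ _ 0 2 char2); rewrite !mxE /= ?oppr_eq0 ?opprK.
Qed.

Lemma std_cremona_inverse (G : qmap K) :
  qinverse F0 G -> exists2 l, l != 0 & forall z, qeval G z = l *: qeval F0 z.
Proof.
move=> [GF [[x0 GFx0] _]].
have [G0 G1 G2] := std_cremona_qinverse_vanish GF.
have diag k : [/\ G k 0 0 = 0, G k 1 1 = 0 & G k 2 2 = 0].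
  move/matrixP/(_ k 0): G0; move/matrixP/(_ k 0): G1; move/matrixP/(_ k 0): G2.
  by rewrite !mxE !qform3 !(mul0r, mulr0, mul1r, mulr1, addr0, add0r) => -> -> ->.
pose L : 'M[K]_3 := \matrix_(k, j)
  [:: G k 1 2 + G k 2 1; - (G k 0 1 + G k 1 0); - (G k 0 2 + G k 2 0)]`_j.
have qformG k a b c :
    qform (G k) (v3 a b c) = L k 0 * (b * c) - L k 2 * (a * c) - L k 1 * (a * b).
  by have [d0 d1 d2] := diag k; rewrite qform3 !mxE /= d0 d1 d2; ring.
have GF0 a b c : qeval G (qeval F0 (v3 a b c)) = (a * b * c) *: (L *m v3 a b c).
  by rewrite std_cremonaE qevalE !qformG mulmx_v3 v3Z; congr v3; ring.
have eigen a b c : a * b * c != 0 -> colin (L *m v3 a b c) (v3 a b c).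
  by move=> abc_nz; apply/(colinZl _ _ abc_nz); rewrite -GF0.
have [l Ll] : exists l, L = l%:M.
  by apply: frame_eigen_scalar; apply: eigen; rewrite !mulf_neq0 ?oppr_eq0 ?oner_eq0.
have GE z : qeval G z = (- l) *: qeval F0 z.
  by rewrite [z]v3E qevalE !qformG std_cremonaE v3Z Ll !mxE /=; congr v3; ring.
exists (- l) => //; rewrite oppr_eq0; apply: contraNneq GFx0 => l0.
by rewrite GE l0 oppr0 scale0r.
Qed.

End StdCremona.

Section StdConfiguration.
Variable K : fieldType.

Definition projection_cremona (A1 A2 : 'M[K]_(3,4)) (c1 c2 : 'cV[K]_4) (M : 'M[K]_4)
    (F : qmap K) : Prop :=
  [/\ quad_cremona F, nondeg_cremona F,
   (forall p : 'cV[K]_4, p != 0 -> onQ M p ->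
      A1 *m p != 0 -> A2 *m p != 0 -> qeval F (A1 *m p) != 0 ->
      psame (qeval F (A1 *m p)) (A2 *m p)),
   (forall x : 'cV[K]_3, basept F x <->
      (psame x (A1 *m c2) \/ image_of_line_through A1 M c1 x)) &
   (forall G : qmap K, qinverse F G ->
      forall y : 'cV[K]_3, basept G y <->
        (psame y (A2 *m c1) \/ image_of_line_through A2 M c2 y))].

Definition drop_coord (i : 'I_4) : 'M[K]_(3,4) := \matrix_(k, j) (j == lift i k)%:R.

(* twice the form [x0 x1 + x2 x3] *)
Definition std_quadric : 'M[K]_4 := \matrix_(i, j) ((i + j == 1)%N || (i + j == 5)%N)%:R.

Hypothesis char2 : (2 : K) != 0.

Local Notation E1 := (v3 0 1 0 : 'cV[K]_3).
Local Notation E2 := (v3 0 0 1 : 'cV[K]_3).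
Local Notation P1 := (drop_coord 0).
Local Notation P2 := (drop_coord 1).
Local Notation M0 := std_quadric.
Local Notation F0 := (std_cremona K).

Lemma drop_coord0E a b c d : P1 *m v4 a b c d = v3 b c d.
Proof. by rewrite [LHS]v3E !mxE !sum4 !mxE /=; congr v3; ring. Qed.

Lemma drop_coord1E a b c d : P2 *m v4 a b c d = v3 a c d.
Proof. by rewrite [LHS]v3E !mxE !sum4 !mxE /=; congr v3; ring. Qed.

Lemma drop_coordTK (i : 'I_4) : (drop_coord i)^T *m drop_coord i = 1%:M - delta_mx i i.
Proof.
apply/matrixP => j l; rewrite !mxE.
have [k ->|->] := unliftP i j.
  rewrite (bigD1 k) //= big1 => [|k' k'k]; last first.
    by rewrite !mxE (inj_eq (@lift_inj _ i)) eq_sym (negPf k'k) mul0r.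
  rewrite !mxE eqxx mul1r addr0 [lift i k == i]eq_sym (negPf (neq_lift i k)) subr0.
  by rewrite eq_sym.
rewrite big1 => [|k _]; last by rewrite !mxE (negPf (neq_lift i k)) mul0r.
by rewrite eqxx /= eq_sym subrr.
Qed.

Lemma factor_drop_coord (B : 'M[K]_(3,4)) i :
  \rank B = 3%N -> B *m (delta_mx i 0 : 'cV_4) = 0 ->
  exists2 D, D \in unitmx & B = D *m drop_coord i.
Proof.
move=> rB Bi0; have BE : B = B *m (drop_coord i)^T *m drop_coord i.
  rewrite -mulmxA drop_coordTK mulmxBr mulmx1 -(mul_delta_mx (0 : 'I_1)) mulmxA Bi0.
  by rewrite mul0mx subr0.
exists (B *m (drop_coord i)^T) => //.
by rewrite -row_free_unit /row_free eqn_leq rank_leq_row -{1}rB {1}BE mxrankM_maxl.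
Qed.

Lemma std_quadricE a b c d : qform M0 (v4 a b c d) = 2 * (a * b + c * d).
Proof. by rewrite qformE !sum4 !mxE /=; ring. Qed.

Lemma std_quadric_sym : M0^T = M0.
Proof. by apply/matrixP => i j; rewrite !mxE addnC. Qed.

Lemma std_quadric_unit : M0 \in unitmx.
Proof.
suff /mulmx1_unit[] : M0 *m M0 = 1%:M by [].
apply/matrixP => i j; rewrite !mxE sum4 !mxE.
by case: i j => [[|[|[|[|i]]]] Hi] [[|[|[|[|j]]]] Hj] //=; rewrite ?mulr1n ?mulr0n; ring.
Qed.

Lemma std_cremona_on_quadric p : onQ M0 p -> qeval F0 (P1 *m p) = p 1 0 *: (P2 *m p).
Proof.
rewrite [p]v4E /onQ std_quadricE drop_coord0E drop_coord1E std_cremonaE v3Z !mxE /=.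
move=> /eqP; rewrite mulf_eq0 (negPf char2) addr_eq0 => /eqP p01.
by congr v3; rewrite -?p01 ?opprK mulrC.
Qed.

Lemma line_in_std_quadric0 d0 d1 d2 d3 :
  line_in_quadric M0 (v4 1 0 0 0) (v4 d0 d1 d2 d3) <-> d1 = 0 /\ d2 * d3 = 0.
Proof.
have lineE a b : qform M0 (a *: v4 1 0 0 0 + b *: v4 d0 d1 d2 d3) =
    2 * (a * b * d1 + b ^+ 2 * (d0 * d1 + d2 * d3)).
  by rewrite !v4Z v4D std_quadricE; ring.
rewrite /line_in_quadric /onQ; split=> [line|[d10 d23] a b]; last first.
  by rewrite lineE d10 d23; ring.
have /eqP := line 0 1; have /eqP := line 1 1; rewrite !lineE !mulf_eq0 (negPf char2) /=.
rewrite !(mul1r, mul0r, add0r, expr1n) => /eqP d1E /eqP d23.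
by move: d1E; rewrite d23 addr0 => d10; split=> //; move: d23; rewrite d10 mulr0 add0r.
Qed.

Lemma line_in_std_quadric1 d0 d1 d2 d3 :
  line_in_quadric M0 (v4 0 1 0 0) (v4 d0 d1 d2 d3) <-> d0 = 0 /\ d2 * d3 = 0.
Proof.
have lineE a b : qform M0 (a *: v4 0 1 0 0 + b *: v4 d0 d1 d2 d3) =
    2 * (a * b * d0 + b ^+ 2 * (d0 * d1 + d2 * d3)).
  by rewrite !v4Z v4D std_quadricE; ring.
rewrite /line_in_quadric /onQ; split=> [line|[d00 d23] a b]; last first.
  by rewrite lineE d00 d23; ring.
have /eqP := line 0 1; have /eqP := line 1 1; rewrite !lineE !mulf_eq0 (negPf char2) /=.
rewrite !(mul1r, mul0r, add0r, expr1n) => /eqP d0E /eqP d23.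
by move: d0E; rewrite d23 addr0 => d00; split=> //; move: d23; rewrite d00 mul0r add0r.
Qed.

Lemma psame_axes x d2 d3 : d2 * d3 = 0 -> psame x (v3 0 d2 d3) -> psame x E1 \/ psame x E2.
Proof.
have [_ E1_nz E2_nz] := coord_points_neq0 K.
move=> d23 /psameP[d_nz [k k_nz ->]].
have [d20|d2_nz] := eqVneq d2 0.
  have d3_nz : d3 != 0 by apply: contraNneq d_nz => d30; rewrite d20 d30 v3_eq0 eqxx.
  right; apply/psameP; split=> //.
  by exists (k * d3); rewrite ?mulf_neq0 // d20 !v3Z !mulr0 mulr1.
have d30 : d3 = 0 by move/eqP: d23; rewrite mulf_eq0 (negPf d2_nz) => /eqP.
left; apply/psameP; split=> //.
by exists (k * d2); rewrite ?mulf_neq0 // d30 !v3Z !mulr0 mulr1.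
Qed.

Lemma image_of_line_through_std0 x :
  image_of_line_through P1 M0 (v4 1 0 0 0) x <-> psame x E1 \/ psame x E2.
Proof.
split=> [[d [_ [line xd]]]|].
  move: line xd; rewrite [d]v4E line_in_std_quadric0 drop_coord0E => -[-> d23].
  exact: psame_axes.
case=> xE; [exists (v4 0 0 1 0) | exists (v4 0 0 0 1)];
  rewrite line_in_std_quadric0 drop_coord0E.
  split; first by apply: (@not_colin_coord _ _ _ _ 0 2); rewrite !mxE /= ?oner_neq0.
  by split; first split; rewrite ?mulr0.
split; first by apply: (@not_colin_coord _ _ _ _ 0 3); rewrite !mxE /= ?oner_neq0.
by split; first split; rewrite ?mul0r.
Qed.

Lemma image_of_line_through_std1 x :
  image_of_line_through P2 M0 (v4 0 1 0 0) x <-> psame x E1 \/ psame x E2.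
Proof.
split=> [[d [_ [line xd]]]|].
  move: line xd; rewrite [d]v4E line_in_std_quadric1 drop_coord1E => -[-> d23].
  exact: psame_axes.
case=> xE; [exists (v4 0 0 1 0) | exists (v4 0 0 0 1)];
  rewrite line_in_std_quadric1 drop_coord1E.
  split; first by apply: (@not_colin_coord _ _ _ _ 1 2); rewrite !mxE /= ?oner_neq0.
  by split; first split; rewrite ?mulr0.
split; first by apply: (@not_colin_coord _ _ _ _ 1 3); rewrite !mxE /= ?oner_neq0.
by split; first split; rewrite ?mul0r.
Qed.

Lemma projection_cremona_std : projection_cremona P1 P2 (v4 1 0 0 0) (v4 0 1 0 0) M0 F0.
Proof.
have or3E (P Q R : Prop) : [\/ P, Q | R] <-> P \/ (Q \/ R).
  by split=> [[] h|[h|[h|h]]]; [left | right; left | right; right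
    | constructor 1 | constructor 2 | constructor 3].
split.
- by exists F0; apply: qinverse_std_cremona.
- exact: nondeg_std_cremona.
- move=> p _ onp _ _; rewrite std_cremona_on_quadric // => F_nz.
  apply/psameP; split; first by apply: contraNneq F_nz => ->; rewrite scaler0.
  by exists (p 1 0) => //; apply: contraNneq F_nz => ->; rewrite scale0r.
- move=> x; rewrite basept_std_cremona drop_coord0E image_of_line_through_std0.
  exact: or3E.
- move=> G invG y; have [l l_nz GE] := std_cremona_inverse char2 invG.
  have -> : basept G y <-> basept F0 y.
    rewrite /basept GE; split=> -[y_nz Fy]; split=> //; last by rewrite Fy scaler0.
    by apply/eqP; move/eqP: Fy; rewrite scaler_eq0 (negPf l_nz).
  rewrite basept_std_cremona drop_coord1E image_of_line_through_std1.
  exact: or3E.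
Qed.

End StdConfiguration.

Section Transport.
Variable K : fieldType.

Lemma line_in_quadric_congr (M S : 'M[K]_4) c d :
  line_in_quadric (S^T *m M *m S) c d <-> line_in_quadric M (S *m c) (S *m d).
Proof.
rewrite /line_in_quadric /onQ.
by split=> line a b; move: (line a b); rewrite qform_mulmx mulmxDr -!scalemxAr.
Qed.

Lemma line_in_quadricZl (M : 'M[K]_4) c d mu :
  mu != 0 -> line_in_quadric M (mu *: c) d <-> line_in_quadric M c d.
Proof.
move=> mu_nz; split=> line a b; last by rewrite scalerA; apply: line.
by move: (line (a / mu) b); rewrite scalerA mulfVK.
Qed.

Section CoordinateChange.
Variables (A A' : 'M[K]_(3,4)) (S : 'M[K]_4) (D : 'M[K]_3) (c c' : 'cV[K]_4) (mu : K).
Hypotheses (Su : S \in unitmx) (Du : D \in unitmx) (mu_nz : mu != 0).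
Hypotheses (eA : A *m S = D *m A') (ec : S *m c' = mu *: c).

Lemma psame_center_transport x : psame x (A *m c) <-> psame (invmx D *m x) (A' *m c').
Proof.
have -> : A *m c = mu^-1 *: (D *m (A' *m c')) by rewrite mulmxA -eA -mulmxA ec -scalemxAr scalerK.
by rewrite psameZr ?invr_eq0 // psame_mulmxr.
Qed.

Lemma image_of_line_through_transport M x :
  image_of_line_through A M c x <-> image_of_line_through A' (S^T *m M *m S) c' (invmx D *m x).
Proof.
have Siu : invmx S \in unitmx by rewrite unitmx_inv.
have cE : c = mu^-1 *: (S *m c') by rewrite ec scalerK.
split=> -[d [nc [line xd]]].
  exists (invmx S *m d); split; last split.
  - move=> /(colin_mulmx S); rewrite mulKVmx // => /(colinZl _ _ (invr_neq0 mu_nz)).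
    by rewrite -cE.
  - by rewrite line_in_quadric_congr mulKVmx // -(line_in_quadricZl _ _ _ (invr_neq0 mu_nz)) -cE.
  - by rewrite -psame_mulmxr // mulmxA -eA -mulmxA mulKVmx.
exists (S *m d); split; last split.
- rewrite cE (colinZl _ _ (invr_neq0 mu_nz)) => /(colin_unitmx _ _ Su); exact: nc.
- by rewrite cE (line_in_quadricZl _ _ _ (invr_neq0 mu_nz)) -line_in_quadric_congr.
- by rewrite mulmxA eA -mulmxA psame_mulmxr.
Qed.

End CoordinateChange.

Lemma projection_cremona_transport A1 A2 c1 c2 M A1' A2' c1' c2' M' S D1 D2 mu1 mu2
    (F : qmap K) :
  S \in unitmx -> D1 \in unitmx -> D2 \in unitmx -> mu1 != 0 -> mu2 != 0 ->
  A1 *m S = D1 *m A1' -> A2 *m S = D2 *m A2' -> S^T *m M *m S = M' ->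
  S *m c1' = mu1 *: c1 -> S *m c2' = mu2 *: c2 ->
  projection_cremona A1' A2' c1' c2' M' F ->
  projection_cremona A1 A2 c1 c2 M (qcomp D2 F (invmx D1)).
Proof.
move=> Su D1u D2u mu1_nz mu2_nz eA1 eA2 eM ec1 ec2 [[G FG] ndF onF bpF bpG].
have D1iu : invmx D1 \in unitmx by rewrite unitmx_inv.
have D2iu : invmx D2 \in unitmx by rewrite unitmx_inv.
split.
- by exists (qcomp (invmx (invmx D1)) G (invmx D2)); apply: qinverse_qcomp.
- exact: nondeg_qcomp.
- move=> p p_nz onp; set p' := invmx S *m p.
  have pE : p = S *m p' by rewrite mulKVmx.
  have onp' : onQ M' p' by rewrite /onQ -eM qform_mulmx -pE.
  have A1p : A1 *m p = D1 *m (A1' *m p') by rewrite pE mulmxA eA1 -mulmxA.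
  have A2p : A2 *m p = D2 *m (A2' *m p') by rewrite pE mulmxA eA2 -mulmxA.
  rewrite qcompE A1p A2p mulKmx // !mulmx_unit_eq0 // => A1p_nz A2p_nz Fp_nz.
  apply/psame_unitmx => //; apply: onF => //.
  by apply: contraNneq p_nz => p'0; rewrite pE p'0 mulmx0.
- move=> x; rewrite basept_qcomp // bpF (psame_center_transport D1u mu2_nz eA1 ec2).
  by rewrite (image_of_line_through_transport Su D1u mu1_nz eA1 ec1) eM.
- move=> G' FG' y.
  have invG : qinverse F (qcomp (invmx D1) G' D2).
    apply: qeval_ext_qinverse (qinverse_qcomp D2iu D1u FG') => [z|z].
      by rewrite !qcompE mulKmx // mulKmx.
    by rewrite invmxK.
  rewrite -[y](mulKVmx D2u) -(basept_qcomp D1iu D2u) (bpG _ invG) mulKVmx //.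
  rewrite (psame_center_transport D2u mu1_nz eA2 ec1).
  by rewrite (image_of_line_through_transport Su D2u mu2_nz eA2 ec2) eM.
Qed.

End Transport.

Section BilinearForms.
Variable K : fieldType.

Definition bf n (N : 'M[K]_n) (u v : 'cV[K]_n) : K := (u^T *m N *m v) 0 0.

Lemma bfDl n (N : 'M[K]_n) u v w : bf N (u + v) w = bf N u w + bf N v w.
Proof. by rewrite /bf linearD /= !mulmxDl mxE. Qed.

Lemma bfDr n (N : 'M[K]_n) u v w : bf N u (v + w) = bf N u v + bf N u w.
Proof. by rewrite /bf mulmxDr mxE. Qed.

Lemma bfZl n (N : 'M[K]_n) k u v : bf N (k *: u) v = k * bf N u v.
Proof. by rewrite /bf linearZ /= -!scalemxAl mxE. Qed.

Lemma bfZr n (N : 'M[K]_n) k u v : bf N u (k *: v) = k * bf N u v.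
Proof. by rewrite /bf -scalemxAr mxE. Qed.

Lemma bfNl n (N : 'M[K]_n) u v : bf N (- u) v = - bf N u v.
Proof. by rewrite -scaleN1r bfZl mulN1r. Qed.

Lemma bfNr n (N : 'M[K]_n) u v : bf N u (- v) = - bf N u v.
Proof. by rewrite -scaleN1r bfZr mulN1r. Qed.

Lemma bf_sym n (N : 'M[K]_n) u v : N^T = N -> bf N u v = bf N v u.
Proof.
move=> symN; rewrite /bf -[in LHS](trmxK (u^T *m N *m v)) mxE.
by rewrite !trmx_mul trmxK symN mulmxA.
Qed.

Lemma bf_deltal n (N : 'M[K]_n) i v : bf N (delta_mx i 0) v = (N *m v) i 0.
Proof. by rewrite /bf trmx_delta -mulmxA -rowE mxE. Qed.

Lemma bf_delta n (N : 'M[K]_n) i j : bf N (delta_mx i 0) (delta_mx j 0) = N i j.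
Proof. by rewrite bf_deltal -colE mxE. Qed.

Lemma gram_entry n (S N : 'M[K]_n) i j : (S^T *m N *m S) i j = bf N (col i S) (col j S).
Proof.
rewrite /bf !mxE; apply: eq_bigr => k _; rewrite !mxE; congr (_ * _).
by apply: eq_bigr => l _; rewrite !mxE.
Qed.

Lemma sym_mx_eq n (X Y : 'M[K]_n) : X^T = X -> Y^T = Y ->
  (forall i j : 'I_n, (i <= j)%N -> X i j = Y i j) -> X = Y.
Proof.
move=> symX symY up; apply/matrixP => i j; have [/up //|/ltnW ji] := leqP i j.
by rewrite -symX -symY !mxE up.
Qed.

End BilinearForms.

Section NormalForm.
Variable K : fieldType.
Hypothesis char2 : (2 : K) != 0.
Hypothesis sqrtK : forall x : K, exists y, y ^+ 2 = x.

Local Notation e i := (delta_mx i 0 : 'cV[K]_4).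
Local Notation M0 := (std_quadric K).

Lemma binary_form_hyperbolic (al be ga : K) : al * ga - be ^+ 2 != 0 ->
  exists p q r s, [/\ al * p ^+ 2 + 2 * be * p * q + ga * q ^+ 2 = 0,
    al * r ^+ 2 + 2 * be * r * s + ga * s ^+ 2 = 0 &
    al * p * r + be * (p * s + q * r) + ga * q * s = 1].
Proof.
move=> disc_nz.
suff [p [q [r [s [h1 h2 h3]]]]] : exists p q r s,
    [/\ al * p ^+ 2 + 2 * be * p * q + ga * q ^+ 2 = 0,
        al * r ^+ 2 + 2 * be * r * s + ga * s ^+ 2 = 0 &
        al * p * r + be * (p * s + q * r) + ga * q * s != 0].
  set b := al * p * r + be * (p * s + q * r) + ga * q * s in h3.
  exists p, q, (r / b), (s / b); split=> //; last by rewrite /b; field.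
  by rewrite -[RHS](mul0r (b ^-2)) -h2; field.
have [al0|al_nz] := eqVneq al 0.
  have be_nz : be != 0 by apply: contraNneq disc_nz => be0; rewrite al0 be0 mul0r expr2 mulr0 subrr.
  exists 1, 0, (- ga), (2 * be); rewrite al0; split; try ring.
  suff -> : 0 * 1 * - ga + be * (1 * (2 * be) + 0 * - ga) + ga * 0 * (2 * be) = 2 * be ^+ 2.
    by rewrite mulf_neq0 // expf_neq0.
  by ring.
(* the two isotropic lines of [al x^2 + 2 be x y + ga y^2] are spanned by
   [(- be +- de, al)] with [de^2 = be^2 - al ga] *)
have [de de2] := sqrtK (be ^+ 2 - al * ga).
have de_nz : de != 0.
  by apply: contraNneq disc_nz => de0; rewrite -oppr_eq0 opprB -de2 de0 expr0n.
exists (- be + de), al, (- be - de), al; split.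
- transitivity (al * (de ^+ 2 - (be ^+ 2 - al * ga))); first by ring.
  by rewrite de2 subrr mulr0.
- transitivity (al * (de ^+ 2 - (be ^+ 2 - al * ga))); first by ring.
  by rewrite de2 subrr mulr0.
- suff -> : al * (- be + de) * (- be - de) + be * ((- be + de) * al + al * (- be - de)) +
      ga * al * al = - (2 * al * de ^+ 2).
    by rewrite oppr_eq0 !mulf_neq0 // expf_neq0.
  transitivity (- (al * de ^+ 2) - al * (be ^+ 2 - al * ga)); first by ring.
  by rewrite -de2; ring.
Qed.

Definition colmx4 (v0 v1 v2 v3 : 'cV[K]_4) : 'M[K]_4 :=
  \matrix_(i, j) [:: v0; v1; v2; v3]`_j i 0.

Lemma col_colmx4 v0 v1 v2 v3 j : col j (colmx4 v0 v1 v2 v3) = [:: v0; v1; v2; v3]`_j.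
Proof. by apply/matrixP => i k; rewrite !mxE ord1. Qed.

Lemma hyperbolic_completion (N : 'M[K]_4) : N^T = N -> N \in unitmx ->
  N 0 0 = 0 -> N 1 1 = 0 -> N 0 1 != 0 ->
  exists s2 s3, (colmx4 (e 0) ((N 0 1)^-1 *: e 1) s2 s3)^T *m N *m
                 colmx4 (e 0) ((N 0 1)^-1 *: e 1) s2 s3 = M0.
Proof.
move=> symN Nu N00 N11 N01_nz.
have N10 : N 1 0 = N 0 1 by rewrite -[in LHS]symN mxE.
have symbf u v : bf N u v = bf N v u := bf_sym u v symN.
(* [w3] and [w4] span the orthogonal of [e 0] and [e 1], where [N] stays nondegenerate *)
pose w3 := e 2 - (N 1 2 / N 0 1) *: e 0 - (N 0 2 / N 0 1) *: e 1.
pose w4 := e 3 - (N 1 3 / N 0 1) *: e 0 - (N 0 3 / N 0 1) *: e 1.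
have [o03 o04 o13 o14] :
    [/\ bf N (e 0) w3 = 0, bf N (e 0) w4 = 0, bf N (e 1) w3 = 0 & bf N (e 1) w4 = 0].
  by split; rewrite !(bfDr, bfNr, bfZr) !bf_delta ?N00 ?N11 ?N10; field.
have key p q : bf N w3 (p *: w3 + q *: w4) = 0 -> bf N w4 (p *: w3 + q *: w4) = 0 ->
    p = 0 /\ q = 0.
  set w := p *: w3 + q *: w4 => o3 o4.
  have [o0 o1] : bf N (e 0) w = 0 /\ bf N (e 1) w = 0.
    by rewrite /w !bfDr !bfZr o03 o04 o13 o14 !mulr0 addr0.
  have : N *m w = 0.
    apply: cV4_eq0; rewrite -!bf_deltal //.
      by move: o3; rewrite !(bfDl, bfNl, bfZl) o0 o1 !mulr0 !subr0.
    by move: o4; rewrite !(bfDl, bfNl, bfZl) o0 o1 !mulr0 !subr0.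
  move/eqP; rewrite mulmx_unit_eq0 // => /eqP/matrixP w0.
  move: (w0 2 0) (w0 3 0); rewrite !mxE /= => p0 q0.
  by split; [rewrite -[RHS]p0 | rewrite -[RHS]q0]; ring.
clearbody w3 w4.
have disc_nz : bf N w3 w3 * bf N w4 w4 - bf N w3 w4 ^+ 2 != 0.
  apply/eqP => disc0.
  have [b0 /eqP] : bf N w3 w4 = 0 /\ - bf N w3 w3 = 0.
    apply: key; rewrite bfDr !bfZr; first by ring.
    by rewrite (symbf w4 w3) -[RHS]oppr0 -disc0; ring.
  rewrite oppr_eq0 => /eqP a0.
  have [/eqP] : (1 : K) = 0 /\ (0 : K) = 0.
    by apply: key; rewrite bfDr !bfZr ?(symbf w4 w3) ?a0 ?b0; ring.
  by rewrite oner_eq0.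
have [p [q [r [s [h1 h2 h3]]]]] := binary_form_hyperbolic disc_nz.
exists (p *: w3 + q *: w4), (r *: w3 + s *: w4).
apply: sym_mx_eq; first by rewrite !trmx_mul trmxK symN mulmxA.
  exact: std_quadric_sym.
move=> i j; rewrite gram_entry !col_colmx4.
case: i j => [[|[|[|[|i]]]] Hi] [[|[|[|[|j]]]] Hj] //= _; rewrite !mxE /=.
- by rewrite bf_delta.
- by rewrite bfZr bf_delta mulVf.
- by rewrite bfDr !bfZr o03 o04 !mulr0 addr0.
- by rewrite bfDr !bfZr o03 o04 !mulr0 addr0.
- by rewrite bfZl bfZr bf_delta N11 !mulr0.
- by rewrite bfZl bfDr !bfZr o13 o14 !mulr0 addr0 mulr0.
- by rewrite bfZl bfDr !bfZr o13 o14 !mulr0 addr0 mulr0.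
- by rewrite !(bfDl, bfDr, bfZl, bfZr) (symbf w4 w3) -[RHS]h1; ring.
- by rewrite !(bfDl, bfDr, bfZl, bfZr) (symbf w4 w3) -[RHS]h3; ring.
- by rewrite !(bfDl, bfDr, bfZl, bfZr) (symbf w4 w3) -[RHS]h2; ring.
Qed.

Lemma colmx4_completion (c1 c2 : 'cV[K]_4) :
  ~ colin c1 c2 -> exists r3 r4, colmx4 c1 c2 r3 r4 \in unitmx.
Proof.
move=> nc; pose U := col_mx c1^T c2^T.
have rU : \rank U = 2%N.
  rewrite -mxrank_tr tr_col_mx !trmxK.
  by move: (rank_leq_col (row_mx c1 c2)) nc; rewrite /colin; case: (\rank _) => [|[|[|]]].
have rC : \rank (U^C)%MS = 2%N by rewrite mxrank_compl rU.
pose R := castmx (rC, erefl 4%N) (row_base (U^C)%MS).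
pose B := col_mx U R.
have Bu : B \in unitmx.
  rewrite -row_full_unit /row_full -addsmxE.
  have -> : (U + R :=: U + U^C)%MS.
    exact: adds_eqmx (eqmx_refl _) (eqmx_trans (eqmx_cast _ _) (eq_row_base _)).
  exact: addsmx_compl_full.
exists (row 2 B)^T, (row 3 B)^T; rewrite -[colmx4 _ _ _ _](trmxK) unitmx_tr.
suff -> : (colmx4 c1 c2 (row 2 B)^T (row 3 B)^T)^T = B by [].
apply/matrixP => i j; rewrite [LHS]mxE [LHS]mxE.
case: i => [[|[|[|[|i]]]] Hi] //=; rewrite ?[(row _ _)^T _ _]mxE ?[row _ _ _ _]mxE.
- have -> : Ordinal Hi = lshift 2 (lshift 1 (0 : 'I_1)) by apply: val_inj.
  apply: etrans _ (esym (col_mxEu U R _ j)).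
  by rewrite /U col_mxEu mxE.
- have -> : Ordinal Hi = lshift 2 (rshift 1 (0 : 'I_1)) by apply: val_inj.
  apply: etrans _ (esym (col_mxEu U R _ j)).
  by rewrite /U col_mxEd mxE.
- by congr (B _ _); apply: val_inj.
- by congr (B _ _); apply: val_inj.
Qed.

Lemma quadric_frame (M : 'M[K]_4) c1 c2 : smooth_quadric M -> onQ M c1 -> onQ M c2 ->
  ~ line_in_quadric M c1 c2 -> ~ colin c1 c2 ->
  exists S mu, [/\ S^T *m M *m S = M0, S *m e 0 = c1, S *m e 1 = mu *: c2 & mu != 0].
Proof.
move=> [symM detM] q1 q2 nl nc.
have [r3 [r4 S0u]] := colmx4_completion nc.
pose S0 := colmx4 c1 c2 r3 r4; pose N := S0^T *m M *m S0.
have symN : N^T = N by rewrite /N !trmx_mul trmxK symM mulmxA.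
have Nu : N \in unitmx by rewrite /N !unitmx_mul unitmx_tr S0u unitmxE unitfE detM.
have N00 : N 0 0 = 0 by rewrite /N gram_entry !col_colmx4; apply: q1.
have N11 : N 1 1 = 0 by rewrite /N gram_entry !col_colmx4; apply: q2.
have N01_nz : N 0 1 != 0.
  rewrite /N gram_entry !col_colmx4 /=; apply/eqP => c12; apply: nl => a b.
  have [b11 b22] : bf M c1 c1 = 0 /\ bf M c2 c2 = 0 by [].
  change (bf M (a *: c1 + b *: c2) (a *: c1 + b *: c2) = 0).
  rewrite !(bfDl, bfDr, bfZl, bfZr) (bf_sym c2 c1 symM) c12 b11 b22; ring.
have [s2 [s3 gramN]] := hyperbolic_completion symN Nu N00 N11 N01_nz.
exists (S0 *m colmx4 (e 0) ((N 0 1)^-1 *: e 1) s2 s3), (N 0 1)^-1; split.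
- by rewrite trmx_mul -gramN /N !mulmxA.
- by rewrite -mulmxA -colE col_colmx4 /= -colE col_colmx4.
- by rewrite -mulmxA -colE col_colmx4 /= -scalemxAr -colE col_colmx4.
- by rewrite invr_eq0.
Qed.

Theorem projection_cremona_exists (A1 A2 : 'M[K]_(3,4)) c1 c2 M :
  linproj A1 -> linproj A2 -> is_center A1 c1 -> is_center A2 c2 -> ~ colin c1 c2 ->
  smooth_quadric M -> onQ M c1 -> onQ M c2 -> ~ line_in_quadric M c1 c2 ->
  exists F, projection_cremona A1 A2 c1 c2 M F.
Proof.
move=> rA1 rA2 [_ A1c1] [_ A2c2] nc sM q1 q2 nl.
have [S [mu [gramM Se0 Se1 mu_nz]]] := quadric_frame sM q1 q2 nl nc.
have Su : S \in unitmx.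
  by move: (@std_quadric_unit K); rewrite -gramM !unitmx_mul => /andP[/andP[]].
have rankAS (A : 'M[K]_(3,4)) : linproj A -> \rank (A *m S) = 3%N.
  by move=> rA; rewrite mxrankMfree ?row_free_unit.
have [D1 D1u eA1] : exists2 D, D \in unitmx & A1 *m S = D *m drop_coord K 0.
  by apply: factor_drop_coord; [apply: rankAS | rewrite -mulmxA Se0].
have [D2 D2u eA2] : exists2 D, D \in unitmx & A2 *m S = D *m drop_coord K 1.
  by apply: factor_drop_coord; [apply: rankAS | rewrite -mulmxA Se1 -scalemxAr A2c2 scaler0].
have e0E : v4 1 0 0 0 = e 0 by apply/matrixP => i j; rewrite !mxE ord1; case: i => [[|[|[|[|]]]]].
have e1E : v4 0 1 0 0 = e 1 by apply/matrixP => i j; rewrite !mxE ord1; case: i => [[|[|[|[|]]]]].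
exists (qcomp D2 (std_cremona K) (invmx D1)).
apply: (projection_cremona_transport Su D1u D2u (oner_neq0 K) mu_nz eA1 eA2 gramM _ _
  (projection_cremona_std char2)); first by rewrite scale1r e0E.
by rewrite e1E.
Qed.

End NormalForm.

Theorem mainTheorem12 (R : realType)
  (A1 A2 : 'M[R[i]]_(3,4)) (c1 c2 : 'cV[R[i]]_4) (M : 'M[R[i]]_4) :
  linproj A1 -> linproj A2 ->
  is_center A1 c1 -> is_center A2 c2 -> ~ colin c1 c2 ->
  smooth_quadric M -> onQ M c1 -> onQ M c2 -> ~ line_in_quadric M c1 c2 ->
  exists F : qmap R[i],
    [/\ quad_cremona F, nondeg_cremona F,
     (forall p : 'cV[R[i]]_4, p != 0 -> onQ M p ->
        A1 *m p != 0 -> A2 *m p != 0 -> qeval F (A1 *m p) != 0 ->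
        psame (qeval F (A1 *m p)) (A2 *m p)),
     (forall x : 'cV[R[i]]_3, basept F x <->
        (psame x (A1 *m c2) \/ image_of_line_through A1 M c1 x)) &
     (forall G : qmap R[i], qinverse F G ->
        forall y : 'cV[R[i]]_3, basept G y <->
          (psame y (A2 *m c1) \/ image_of_line_through A2 M c2 y))].
Proof.
move=> rA1 rA2 A1c1 A2c2 nc sM q1 q2 nl.
have char2 : (2 : R[i]) != 0 by rewrite pnatr_eq0.
have sqrtC (x : R[i]) : exists y, y ^+ 2 = x by exists (sqrtc x); apply: sqr_sqrtc.
have [F hF] := projection_cremona_exists char2 sqrtC rA1 rA2 A1c1 A2c2 nc sM q1 q2 nl.
by exists F.
Qed.
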